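(* Let $\mathcal{C}_0$ be a linear code of length $\ell$ over a finite field $S$ with $|S|=s$, let $q$ be a power of a prime $p$, let $\mathcal{C}=\mathrm{IC}_q(\mathcal{C}_0)$, and let $n=\ell s$ be its length. If $\mathcal{C}_0$ is $p$-divisible, then $$\mathcal{C}^\perp\cap\mathcal{P}\subseteq\mathcal{C},$$ where $\mathcal{P}=\{c\in\mathbb{F}_q^n:\sum_i c_i=0\}$ is the parity-check code of length $n$; in particular $\dim\mathcal{C}\ge\frac{n-1}{2}$. If moreover $p\mid\ell$, then $\mathcal{C}^\perp\subseteq\mathcal{C}$ and $\dim\mathcal{C}\ge\frac n2$.
   Context: A linear code is $p$-divisible if $p$ divides the Hamming weight of each of its codewords. For a code $\mathcal{C}_0\subseteq S^\ell$, its incidence code over $\mathbb{F}_q$ is $\mathrm{IC}_q(\mathcal{C}_0)=\{u\in\mathbb{F}_q^{S\times[1,\ell]}:\ \sum_{i=1}^\ell u_{(c_i,i)}=0\ \text{for all } c\in\mathcal{C}_0\}$, i.e. the code with parity-check matrix $M$, where $M$ has rows indexed by $c\in\mathcal{C}_0$, columns indexed by $(\alpha,i)\in S\times[1,\ell]$, and $M[c,(\alpha,i)]=1$ iff $c_i=\alpha$. $\mathcal{C}^\perp$ denotes the dual code (here the row space of $M$ over $\mathbb{F}_q$). *)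

From HB Require Import structures.
From mathcomp Require Import all_boot all_order all_algebra.
Set Implicit Arguments. Unset Strict Implicit. Unset Printing Implicit Defensive.
Import GRing.Theory.
Local Open Scope ring_scope.

(* Words over F_q indexed by coordinates S x [1,l]; we use F^o so that the
   type of words is canonically an F-vector space (vectType). *)
Definition word (F : finFieldType) (S : finType) (l : nat) :=
  {ffun S * 'I_l -> F^o}.

Definition hweight (S : fieldType) (l : nat) (c : 'rV[S]_l) : nat :=
  #|[set i : 'I_l | c 0 i != 0]|.

Definition pdivisible (S : fieldType) (l : nat) (p : nat) (C0 : {vspace 'rV[S]_l}) :=
  forall c : 'rV[S]_l, c \in C0 -> (p %| hweight c)%N.

Definition IC (F : finFieldType) (S : finFieldType) (l : nat) (C0 : {vspace 'rV[S]_l})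
  : {set word F S l} :=
  [set u : word F S l | [forall c : 'rV[S]_l, (c \in C0) ==>
                            (\sum_(i < l) u (c 0 i, i) == 0)]].

Definition dotw (F : finFieldType) (S : finType) (l : nat) (u v : word F S l) : F :=
  \sum_x (u x : F) * (v x : F).

Definition dual (F : finFieldType) (S : finType) (l : nat) (C : {set word F S l})
  : {set word F S l} :=
  [set v | [forall u in C, dotw u v == 0]].

Definition parity (F : finFieldType) (S : finType) (l : nat) : {set word F S l} :=
  [set v : word F S l | \sum_x (v x : F) == 0].

Definition cdim (F : finFieldType) (S : finType) (l : nat) (C : {set word F S l}) : nat :=
  \dim (span (enum C)).

From HB Require Import structures.
From mathcomp Require Import all_boot all_order all_algebra all_field.
From mathcomp Require Import zify.
Import GRing.Theory.
Set Implicit Arguments. Unset Strict Implicit. Unset Printing Implicit Defensive.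
Local Open Scope ring_scope.

(* The rows of the parity-check matrix of IC_q(C0) are the incidence words
   chi_c of the codewords c of C0.  Two of them meet in as many coordinates as
   c and c' agree, i.e. in l - wt(c - c') = l (mod p) coordinates when C0 is
   p-divisible.  Hence every chi_c - 1 lies in C = IC_q(C0) (and every chi_c
   if moreover p | l), so a word of C^perp orthogonal to the all-one word is
   orthogonal to all rows, i.e. lies in C.  The dimension bounds follow from
   dim C^perp >= n - dim C and dim P >= n - 1. *)

Lemma agreements_add_hweight (S : fieldType) (l : nat) (c c' : 'rV[S]_l) :
  (#|[set i : 'I_l | c 0%R i == c' 0%R i]| + hweight (c - c'))%N = l.
Proof.
rewrite /hweight -[RHS]card_ord -(cardsC [set i : 'I_l | c 0%R i == c' 0%R i]).
by congr (_ + _)%N; apply: eq_card => i; rewrite !inE !mxE subr_eq0.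
Qed.

Section Words.

Variables (F : finFieldType) (S : finType) (l : nat).
Local Notation word := (word F S l).

Lemma dimv_word : \dim {: word} = (l * #|S|)%N.
Proof. by rewrite dimvf /dim /= card_prod card_ord muln1 mulnC. Qed.

Lemma dotwBl (u w v : word) : dotw (u - w) v = dotw u v - dotw w v.
Proof. by rewrite /dotw -sumrB; apply: eq_bigr => x _; rewrite !ffunE mulrBl. Qed.

Lemma dotwBr (u v w : word) : dotw u (v - w) = dotw u v - dotw u w.
Proof. by rewrite /dotw -sumrB; apply: eq_bigr => x _; rewrite !ffunE mulrBr. Qed.

Lemma dotwZDr (a : F) (u v w : word) : dotw u (a *: v + w) = a * dotw u v + dotw u w.
Proof.
rewrite /dotw mulr_sumr -big_split; apply: eq_bigr => x _ /=.
by rewrite !ffunE /= mulrDr mulrCA.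
Qed.

Lemma dotw_sumZl (I : Type) (r : seq I) (P : pred I) (a : I -> F) (u : I -> word)
    (v : word) :
  dotw (\sum_(i <- r | P i) a i *: u i) v = \sum_(i <- r | P i) a i * dotw (u i) v.
Proof.
elim/big_rec2: _ => [|i b w _ <-].
  by rewrite /dotw big1 // => x _; rewrite ffunE mul0r.
rewrite /dotw mulr_sumr -big_split; apply: eq_bigr => x _ /=.
by rewrite !ffunE /= mulrDl mulrA.
Qed.

Definition onew : word := [ffun => 1].

Lemma dotw_onew (v : word) : dotw onew v = \sum_x (v x : F).
Proof. by apply: eq_bigr => x _; rewrite ffunE mul1r. Qed.

Definition dotmap (ws : seq word) (v : word) : {ffun 'I_(size ws) -> F^o} :=
  [ffun i : 'I_(size ws) => dotw ws`_i v].

Fact dotmap_is_linear (ws : seq word) : linear (dotmap ws).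
Proof. by move=> a u v; apply/ffunP=> i; rewrite !ffunE dotwZDr. Qed.

HB.instance Definition _ (ws : seq word) :=
  GRing.isLinear.Build F word _ _ (dotmap ws) (dotmap_is_linear ws).

Lemma annihilator_dim (ws : seq word) :
  exists U : {vspace word}, (\dim {: word} <= \dim U + size ws)%N /\
    forall v, v \in U -> forall w, w \in ws -> dotw w v = 0.
Proof.
exists (lker (linfun (dotmap ws))); split.
  have := limg_ker_dim (linfun (dotmap ws)) fullv.
  rewrite capfv => <-; rewrite leq_add2l.
  by apply: leq_trans (dimvS (subvf _)) _; rewrite dimvf /dim /= card_ord muln1.
move=> v; rewrite memv_ker lfunE /= => /eqP dotmap_v0 w /(nthP 0) [i lt_i_ws <-].
by have := congr1 (fun f : {ffun _ -> _} => f (Ordinal lt_i_ws)) dotmap_v0; rewrite !ffunE.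
Qed.

Lemma dual_dim (C : {set word}) :
  exists U : {vspace word}, (\dim {: word} <= \dim U + cdim C)%N /\
    forall v, v \in U -> v \in dual C.
Proof.
have [U [dimU U_annih]] := annihilator_dim (vbasis <<enum C>>).
exists U; rewrite size_tuple in dimU; split=> // v vU.
rewrite inE; apply/forall_inP => u uC.
have /coord_vbasis -> : u \in <<enum C>>%VS by rewrite memv_span ?mem_enum.
rewrite dotw_sumZl big1 // => i _.
by rewrite U_annih ?mulr0 // mem_nth // size_tuple.
Qed.

Lemma parity_dim :
  exists W : {vspace word}, (\dim {: word} <= \dim W + 1)%N /\
    forall v, v \in W -> v \in parity F S l.
Proof.
have [W [dimW W_annih]] := annihilator_dim [:: onew].
exists W; split=> // v vW.
by rewrite inE -dotw_onew W_annih ?mem_head.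
Qed.

Lemma cdim_dual_parity (C : {set word}) :
  dual C :&: parity F S l \subset C -> (l * #|S| - 1 <= 2 * cdim C)%N.
Proof.
move=> sub_dualP_C; rewrite -dimv_word.
have [U [dimU UD]] := dual_dim C; have [W [dimW WP]] := parity_dim.
have dim_cap : (\dim (U :&: W) <= cdim C)%N.
  apply: dimvS; apply/subvP => x; rewrite memv_cap => /andP [xU xW].
  by rewrite memv_span // mem_enum (subsetP sub_dualP_C) // inE UD // WP.
have := dimv_sum_cap U W; have := dimvS (subvf (U + W)); lia.
Qed.

Lemma cdim_dual (C : {set word}) :
  dual C \subset C -> (l * #|S| <= 2 * cdim C)%N.
Proof.
move=> sub_dual_C; rewrite -dimv_word.
have [U [dimU UD]] := dual_dim C.
suff : (\dim U <= cdim C)%N by lia.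
apply: dimvS; apply/subvP => x xU.
by rewrite memv_span // mem_enum (subsetP sub_dual_C) // UD.
Qed.

End Words.

Section IncidenceCode.

Variables (F S : finFieldType) (l : nat) (C0 : {vspace 'rV[S]_l}).
Local Notation word := (word F S l).

Definition incidence_word (c : 'rV[S]_l) : word :=
  [ffun x => (c 0 x.2 == x.1)%:R].

Lemma dotw_incidence_word (c : 'rV[S]_l) (v : word) :
  dotw (incidence_word c) v = \sum_(i < l) v (c 0 i, i).
Proof.
transitivity (\sum_(a : S) \sum_(i < l) incidence_word c (a, i) * v (a, i)).
  by rewrite pair_big; apply: eq_bigr => -[].
rewrite exchange_big /=; apply: eq_bigr => i _.
rewrite (bigD1 (c 0 i)) //= ffunE eqxx mul1r big1 ?addr0 //.
by move=> a /negbTE neq_a; rewrite ffunE /= eq_sym neq_a mul0r.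
Qed.

Lemma dotw_incidence_words (c c' : 'rV[S]_l) :
  dotw (incidence_word c') (incidence_word c) = #|[set i | c 0%R i == c' 0%R i]|%:R.
Proof.
rewrite dotw_incidence_word -sum1_card natr_sum [RHS]big_mkcond /=.
by apply: eq_bigr => i _; rewrite ffunE inE /=; case: eqP.
Qed.

Lemma memIC (u : word) :
  (u \in IC F C0) = [forall c, (c \in C0) ==> (dotw (incidence_word c) u == 0)].
Proof.
by rewrite inE; apply: eq_forallb => c; rewrite dotw_incidence_word.
Qed.

Variable p : nat.
Hypotheses (charFp : p \in [pchar F]) (C0_pdiv : pdivisible p C0).

Lemma dotw_incidence_words_pdiv (c c' : 'rV[S]_l) : c \in C0 -> c' \in C0 ->
  dotw (incidence_word c') (incidence_word c) = l%:R.
Proof.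
move=> cC0 c'C0; rewrite dotw_incidence_words -[in RHS](agreements_add_hweight c c').
have /C0_pdiv : c - c' \in C0 by rewrite memvB.
by rewrite (dvdn_pcharf charFp) natrD => /eqP ->; rewrite addr0.
Qed.

Lemma incidence_word_subIC (c : 'rV[S]_l) :
  c \in C0 -> incidence_word c - onew F S l \in IC F C0.
Proof.
move=> cC0; rewrite memIC; apply/forall_inP => c' c'C0.
rewrite dotwBr dotw_incidence_words_pdiv // dotw_incidence_word.
by rewrite (eq_bigr (fun=> 1)) => [|i _]; rewrite ?ffunE // sumr_const card_ord subrr.
Qed.

Lemma incidence_wordIC (c : 'rV[S]_l) :
  (p %| l)%N -> c \in C0 -> incidence_word c \in IC F C0.
Proof.
move=> p_dvd_l cC0; rewrite memIC; apply/forall_inP => c' c'C0.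
by rewrite dotw_incidence_words_pdiv // -(dvdn_pcharf charFp).
Qed.

Lemma dual_parity_subIC : dual (IC F C0) :&: parity F S l \subset IC F C0.
Proof.
apply/subsetP => v; rewrite !inE => /andP [/forall_inP v_dual /eqP v_parity].
apply/forall_inP => c cC0; rewrite -dotw_incidence_word.
have := v_dual _ (incidence_word_subIC cC0).
by rewrite dotwBl dotw_onew v_parity subr0.
Qed.

Lemma dual_subIC : (p %| l)%N -> dual (IC F C0) \subset IC F C0.
Proof.
move=> p_dvd_l; apply/subsetP => v; rewrite inE => /forall_inP v_dual.
rewrite memIC; apply/forall_inP => c cC0.
by rewrite v_dual // incidence_wordIC.
Qed.

End IncidenceCode.

Theorem mainTheorem14 (S : finFieldType) (l : nat) (C0 : {vspace 'rV[S]_l})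
  (F : finFieldType) (p k : nat) (hp : prime p) (hk : (0 < k)%N)
  (hq : #|F| = (p ^ k)%N) :
  let C := IC F C0 in
  let n := (l * #|S|)%N in
  pdivisible p C0 ->
  [/\ dual C :&: parity F S l \subset C,
      (n - 1 <= 2 * cdim C)%N &
      ((p %| l)%N -> dual C \subset C /\ (n <= 2 * cdim C)%N)].
Proof.
move=> C n C0_pdiv; have charFp : p \in [pchar F] := card_finPcharP hq hp.
have sub_dualP_C := dual_parity_subIC charFp C0_pdiv.
split; [exact: sub_dualP_C | exact: cdim_dual_parity sub_dualP_C |].
move=> p_dvd_l; have sub_dual_C := dual_subIC charFp C0_pdiv p_dvd_l.
by split; [exact: sub_dual_C | exact: cdim_dual sub_dual_C].
Qed.
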